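(* Let $mG$ be a finite canonical misinformation game, $\Gamma=(\mathcal{AD}^*(\{mG\}),E)$ its adaptation graph, and $\Gamma'$ its loopless version. Then $\Gamma'$ is a directed acyclic graph.
   Context: A normal-form game is $G=\langle N,S,P\rangle$ with finite players $N$, finite pure strategy sets $S_i$, positions $S=\times_i S_i$, payoffs $P_i:S\to\mathbb{R}$. A misinformation game $mG=\langle G^0,G^1,\dots,G^{|N|}\rangle$ consists of the actual game $G^0$ and subjective games $G^i$; it is canonical if all $G^i=\langle N,S,P^i\rangle$ differ from $G^0$ only in payoffs and in every $G^i$ all players have equally many pure strategies. $NME(mG)$ is the set of profiles $\sigma=(\sigma_1,\dots,\sigma_{|N|})$ such that each $\sigma_i$ is player $i$'s component of some Nash equilibrium of $G^i$. $\chi(\sigma)=\mathrm{supp}(\sigma_1)\times\dots\times\mathrm{supp}(\sigma_{|N|})$. For $\vec v\in S$, $mG_{\vec v}$ is obtained by replacing, in every $P^i$ ($i\ge1$), the payoff vector at position $\vec v$ by $P^0(\vec v)$. For a set $M$ of misinformation games, $\mathcal{AD}(M)=\{mG_{\vec u}: mG\in M,\sigma\in NME(mG),\vec u\in\chi(\sigma)\}$, $\mathcal{AD}^{(0)}(M)=M$, $\mathcal{AD}^{(t+1)}(M)=\mathcal{AD}^{(t)}(\mathcal{AD}(M))$, $\mathcal{AD}^*(M)=\bigcup_{t\ge0}\mathcal{AD}^{(t)}(M)$. The adaptation graph $\Gamma$ is the directed graph with vertex set $\mathcal{AD}^*(\{mG\})$ and an edge $(mG^1,mG^2)$ iff $mG^2=(mG^1)_{\vec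 v}$ for some $\sigma\in NME(mG^1)$ and $\vec v\in\chi(\sigma)$. Its loopless version $\Gamma'$ has the same vertices and the edges of $\Gamma$ with $mG^1\neq mG^2$. *)

From HB Require Import structures.
From mathcomp Require Import all_boot all_order all_algebra.
From mathcomp Require Import reals.
From Stdlib Require Import Relations.
Set Implicit Arguments. Unset Strict Implicit. Unset Printing Implicit Defensive.
Import Order.TTheory GRing.Theory Num.Theory.
Local Open Scope ring_scope.

Section MisinfoGames.
Variable R : realType.
Variable n : nat.
Variable S : 'I_n -> finType.

Definition position := {dffun forall i : 'I_n, S i}.

Definition payoff := {ffun position -> {ffun 'I_n -> R}}.

(* A canonical misinformation game <G^0, G^1, ..., G^n>: all games share the
   players and the strategy sets, so it is given by the actual payoff P^0 and
   the subjective payoffs P^i, i = 1..n (indexed here by the player i : 'I_n). *)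
Definition mgame := (payoff * {ffun 'I_n -> payoff})%type.
Definition actual (mG : mgame) : payoff := mG.1.
Definition subj (mG : mgame) (i : 'I_n) : payoff := mG.2 i.

Definition profile := forall i : 'I_n, {ffun S i -> R}.
Definition is_mixed (i : 'I_n) (s : {ffun S i -> R}) : Prop :=
  (forall x, 0 <= s x) /\ \sum_x s x = 1.
Definition is_profile (sg : profile) : Prop := forall i, is_mixed (sg i).

Definition exp_payoff (P : payoff) (sg : profile) (j : 'I_n) : R :=
  \sum_(v : position) (\prod_(i < n) sg i (v i)) * P v j.

Definition nash (P : payoff) (sg : profile) : Prop :=
  is_profile sg /\
  forall (j : 'I_n) (tau : profile), is_profile tau ->
    (forall i, i != j -> tau i = sg i) ->
    exp_payoff P tau j <= exp_payoff P sg j.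

Definition NME (mG : mgame) (sg : profile) : Prop :=
  forall i : 'I_n, exists sg' : profile, nash (subj mG i) sg' /\ sg' i = sg i.

Definition chi (sg : profile) (v : position) : Prop :=
  forall i : 'I_n, 0 < sg i (v i).

Definition update (mG : mgame) (v : position) : mgame :=
  (actual mG, [ffun i => [ffun u => if u == v then actual mG v else subj mG i u]]).

Definition AD (M : mgame -> Prop) : mgame -> Prop :=
  fun mG' => exists (mG : mgame) (sg : profile) (u : position),
    M mG /\ NME mG sg /\ chi sg u /\ mG' = update mG u.

Fixpoint AD_iter (t : nat) (M : mgame -> Prop) : mgame -> Prop :=
  match t with
  | 0 => M
  | t'.+1 => AD_iter t' (AD M)
  end.

Definition AD_star (M : mgame -> Prop) : mgame -> Prop :=
  fun x => exists t, AD_iter t M x.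

Definition Gamma_vertex (mG : mgame) : mgame -> Prop := AD_star (fun x => x = mG).

Definition Gamma_edge (mG : mgame) (mG1 mG2 : mgame) : Prop :=
  Gamma_vertex mG mG1 /\ Gamma_vertex mG mG2 /\
  exists (sg : profile) (v : position), NME mG1 sg /\ chi sg v /\ mG2 = update mG1 v.

Definition Gamma'_edge (mG : mgame) (mG1 mG2 : mgame) : Prop :=
  Gamma_edge mG mG1 mG2 /\ mG1 <> mG2.

Definition acyclic (E : mgame -> mgame -> Prop) : Prop :=
  forall x, ~ clos_trans mgame E x x.

End MisinfoGames.

(* Adapting at a position v overwrites every subjective payoff at v with the
   actual one and changes nothing else. Hence an adaptation never creates a
   disagreement between a subjective and the actual payoff, and one that
   changes the game removes at least one. The number of disagreements thus
   strictly decreases along the edges of the loopless adaptation graph, so it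
   has no cycle. *)
From mathcomp Require Import all_boot all_order all_algebra.
From mathcomp Require Import reals.
From Stdlib Require Import Relations.

Lemma clos_trans_measure {T : Type} {E : relation T} (f : T -> nat) :
  (forall x y, E x y -> f y < f x) ->
  forall x y, clos_trans T E x y -> f y < f x.
Proof.
move=> decE x y; elim=> [u v /decE // | u v w _ lt_vu _ lt_wv].
exact: ltn_trans lt_wv lt_vu.
Qed.

Lemma acyclic_measure {T : Type} {E : relation T} (f : T -> nat) :
  (forall x y, E x y -> f y < f x) -> forall x, ~ clos_trans T E x x.
Proof. by move=> decE x /(clos_trans_measure f decE); rewrite ltnn. Qed.

Section Mismatches.
Variable R : realType.
Variable n : nat.
Variable S : 'I_n -> finType.
Implicit Types (mG : mgame R S) (v : position S).

Definition mismatches mG : {set 'I_n * position S} :=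
  [set p | subj mG p.1 p.2 != actual mG p.2].

Lemma subj_update mG v i u :
  subj (update mG v) i u = if u == v then actual mG v else subj mG i u.
Proof. by rewrite /subj /update /= !ffunE. Qed.

Lemma update_id mG v : (forall i, subj mG i v = actual mG v) -> update mG v = mG.
Proof.
case: mG => P0 Ps subj_v; congr pair; apply/ffunP=> i; apply/ffunP=> u.
by rewrite !ffunE; case: eqP => [-> | //]; rewrite -(subj_v i).
Qed.

Lemma mismatches_update_sub mG v :
  mismatches (update mG v) \subset mismatches mG.
Proof.
apply/subsetP=> -[i u]; rewrite !inE /= subj_update.
by case: (u =P v) => [-> | _]; rewrite ?eqxx.
Qed.

Lemma mismatches_update_proper mG v :
  update mG v <> mG -> mismatches (update mG v) \proper mismatches mG.
Proof.
move=> changed; rewrite properE mismatches_update_sub /=.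
have [i mis_iv] : exists i, subj mG i v != actual mG v.
  apply/existsP; apply: contraT; rewrite negb_exists => /forallP agree.
  by case: changed; apply: update_id => i; apply/eqP/negPn/agree.
apply/subsetPn; exists (i, v); first by rewrite inE.
by rewrite inE /= subj_update eqxx negbK.
Qed.

Lemma Gamma'_edge_mismatches mG mG1 mG2 :
  Gamma'_edge mG mG1 mG2 -> #|mismatches mG2| < #|mismatches mG1|.
Proof.
move=> [[_ [_ [sg [v [_ [_ ->]]]]]] changed].
by apply/proper_card/mismatches_update_proper => /esym.
Qed.

End Mismatches.

Theorem proposition17 (R : realType) (n : nat) (S : 'I_n -> finType)
  (Hcanon : forall i j : 'I_n, #|S i| = #|S j|)
  (mG : mgame R S) :
  acyclic (Gamma'_edge mG).
Proof.
exact: acyclic_measure (@Gamma'_edge_mismatches R n S mG).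
Qed.
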